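(* Let $X$ be a Baire space, $Y$ a topological space, $(Z,d)$ a metric space and $f:X\times Y\to Z$ a mapping. Suppose that each $y\in Y$ has a neighborhood with a countable pseudobase, and that one of the following holds: (i) for each $x\in X$, $f_x$ is quasicontinuous and there is a dense set $D_x\subset Y$ such that $f^y$ is quasicontinuous at $x$ for every $y\in D_x$; (ii) for each $y\in Y$, $f^y$ is quasicontinuous and there is a dense Baire subspace $Q_y\subset X$ such that $f_x$ is quasicontinuous at $y$ for every $x\in Q_y$. Then $f$ is quasicontinuous (as a mapping on $X\times Y$ with the product topology).
   Context: $f_x(y)=f^y(x)=f(x,y)$. A mapping $g:T\to Z$ is quasicontinuous at $t$ if for each neighborhood $U$ of $t$ and each neighborhood $W$ of $g(t)$ there is an open $O$ with $\emptyset\ne O\subset U$ and $g(O)\subset W$; quasicontinuous means at every point. A pseudobase of a space is a collection of nonempty open sets such that every nonempty open set contains one of them. *)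

From Stdlib Require Import Reals.
Open Scope R_scope.

Definition topology (S : Type) := (S -> Prop) -> Prop.

Definition is_topology {S : Type} (T : topology S) : Prop :=
  T (fun _ => True) /\
  (forall U V, T U -> T V -> T (fun x => U x /\ V x)) /\
  (forall F : (S -> Prop) -> Prop, (forall U, F U -> T U) ->
     T (fun x => exists U, F U /\ U x)).

Definition nbhd {S : Type} (T : topology S) (N : S -> Prop) (x : S) : Prop :=
  exists U, T U /\ U x /\ forall y, U y -> N y.

Definition dense {S : Type} (T : topology S) (D : S -> Prop) : Prop :=
  forall U, T U -> (exists x, U x) -> exists x, U x /\ D x.

Definition baire {S : Type} (T : topology S) : Prop :=
  forall G : nat -> S -> Prop, (forall n, T (G n) /\ dense T (G n)) ->
    dense T (fun x => forall n, G n x).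

Definition subspace {S : Type} (T : topology S) (A : S -> Prop) :
  topology {x : S | A x} :=
  fun V => exists U, T U /\ forall s, V s <-> U (proj1_sig s).

Definition has_countable_pseudobase {S : Type} (T : topology S) : Prop :=
  exists B : nat -> S -> Prop,
    (forall n, T (B n) /\ exists x, B n x) /\
    (forall V, T V -> (exists x, V x) ->
       exists n, forall x, B n x -> V x).

Definition prod_topology {S1 S2 : Type} (T1 : topology S1) (T2 : topology S2) :
  topology (S1 * S2) :=
  fun W => forall p, W p -> exists A B, T1 A /\ T2 B /\ A (fst p) /\ B (snd p) /\
     forall a b, A a -> B b -> W (a, b).

Definition is_metric {Z : Type} (d : Z -> Z -> R) : Prop :=
  (forall x y, 0 <= d x y) /\
  (forall x y, d x y = 0 <-> x = y) /\
  (forall x y, d x y = d y x) /\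
  (forall x y z, d x z <= d x y + d y z).

Definition metric_topology {Z : Type} (d : Z -> Z -> R) : topology Z :=
  fun U => forall z, U z -> exists eps, 0 < eps /\ forall w, d z w < eps -> U w.

Definition quasicontinuous_at {S Z : Type} (T : topology S) (TZ : topology Z)
  (g : S -> Z) (t : S) : Prop :=
  forall U W, nbhd T U t -> nbhd TZ W (g t) ->
    exists O, T O /\ (exists s, O s) /\ (forall s, O s -> U s) /\
              (forall s, O s -> W (g s)).

Definition quasicontinuous {S Z : Type} (T : topology S) (TZ : topology Z)
  (g : S -> Z) : Prop := forall t, quasicontinuous_at T TZ g t.

(** The problem is local: around (x0, y0) we must find a nonempty open rectangle on which f
    stays close to f (x0, y0).  Fix a base point y1 (y1 = y0 in case (ii), a point of the
    dense set D_(x0) in case (i)) and a neighbourhood A0 of x0 on which f(., y1) is close to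
    f (x0, y1).  For each admissible x in A0, quasicontinuity of f_x at y1 yields a member C_n
    of the countable pseudobase on which f_x stays close to f_x(y1); these countably many
    conditions cover A0 (or its trace on the Baire subspace Q_(y0)), so by the Baire property
    one of them is dense in some open A1 inside A0.  On A1 x C_n, f is close to f (x0, y0):
    to estimate f (x, y) move to a nearby good point x' of A1 using the quasicontinuity of
    the remaining sections. *)

From Stdlib Require Import Reals Lra Classical FunctionalExtensionality PropExtensionality.
Open Scope R_scope.

Definition dense_in {S : Type} (T : topology S) (A E : S -> Prop) : Prop :=
  forall O, T O -> (exists x, O x) -> (forall x, O x -> A x) -> exists x, O x /\ E x.

Definition everywhere_second_category {S : Type} (T : topology S) (Q : S -> Prop) : Prop :=
  forall (A0 : S -> Prop) (E : nat -> S -> Prop), T A0 -> (exists x, A0 x) ->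
    (forall x, A0 x -> Q x -> exists n, E n x) ->
    exists n A1, T A1 /\ (exists x, A1 x) /\ (forall x, A1 x -> A0 x) /\ dense_in T A1 (E n).

Definition pseudobase_within {S : Type} (T : topology S) (W : S -> Prop)
  (C : nat -> S -> Prop) : Prop :=
  (forall n, T (C n)) /\
  forall V, T V -> (exists y, V y) -> (forall y, V y -> W y) ->
    exists n, (exists y, C n y) /\ forall y, C n y -> V y.

Section Topology.

Context {S : Type} (T : topology S) (Htop : is_topology T).

Lemma open_ext (U V : S -> Prop) : T U -> (forall x, U x <-> V x) -> T V.
Proof.
  intros HU HUV. replace V with U; [exact HU|].
  apply functional_extensionality; intro x. apply propositional_extensionality, HUV.
Qed.

Lemma open_inter (U V : S -> Prop) : T U -> T V -> T (fun x => U x /\ V x).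
Proof. destruct Htop as [_ [Hinter _]]. apply Hinter. Qed.

Lemma open_union (F : (S -> Prop) -> Prop) :
  (forall U, F U -> T U) -> T (fun x => exists U, F U /\ U x).
Proof. destruct Htop as [_ [_ Hunion]]. apply Hunion. Qed.

Lemma subspace_is_topology (Q : S -> Prop) : is_topology (subspace T Q).
Proof.
  destruct Htop as [Hfull _]. split; [|split].
  - exists (fun _ => True). split; [exact Hfull | tauto].
  - intros U V [U' [HU' EU]] [V' [HV' EV]].
    exists (fun x => U' x /\ V' x). split; [apply open_inter; assumption|].
    intro s. rewrite EU, EV. tauto.
  - intros F HF.
    exists (fun x => exists U, (exists V, F V /\ T U /\ forall s, V s <-> U (proj1_sig s)) /\ U x).
    split.
    + apply open_union. intros U [V [_ [HU _]]]. exact HU.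
    + intro s. split.
      * intros [V [HV Vs]]. destruct (HF V HV) as [U [HU EU]].
        exists U. split; [exists V; auto | apply EU, Vs].
      * intros [U [[V [HV [_ EV]]] Us]]. exists V. split; [exact HV | apply EV, Us].
Qed.

Lemma not_dense_in_disjoint (A E : S -> Prop) : ~ dense_in T A E ->
  exists O, T O /\ (exists x, O x) /\ (forall x, O x -> A x) /\ (forall x, O x -> ~ E x).
Proof.
  intro Hnd. apply NNPP; intro Hno. apply Hnd. intros O HO HOne HOA.
  apply NNPP; intro HOE. apply Hno. exists O. repeat split; auto.
  intros x Ox Ex. apply HOE. exists x; auto.
Qed.

(* If no E n were somewhere dense in A0, the sets "interior of the complement of E n within
   A0" would be dense open, and a point of A0 in all of them would lie in no E n. *)
Lemma baire_everywhere_second_category : baire T -> everywhere_second_category T (fun _ => True).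
Proof.
  intros Hb A0 E HA0 [a Ha] Hcov. apply NNPP; intro Hnone.
  set (G := fun n x => exists O, (T O /\ forall y, O y -> A0 y -> ~ E n y) /\ O x).
  assert (HG : forall n, T (G n) /\ dense T (G n)).
  { intro n. split.
    - apply open_union. intros U [HU _]. exact HU.
    - intros U HU [u Uu].
      destruct (classic (exists x, U x /\ A0 x)) as [UA0ne | UA0empty].
      + assert (Hnd : ~ dense_in T (fun x => U x /\ A0 x) (E n)).
        { intro Hd. apply Hnone. exists n, (fun x => U x /\ A0 x).
          repeat split; auto using open_inter. intros x [_ Hx]. exact Hx. }
        destruct (not_dense_in_disjoint _ _ Hnd) as [O [HO [[o Oo] [OUA0 OE]]]].
        exists o. split; [apply OUA0, Oo|].
        exists O. split; [|exact Oo]. split; [exact HO|]. intros y Oy _. apply OE, Oy.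
      + exists u. split; [exact Uu|]. exists U. split; [|exact Uu]. split; [exact HU|].
        intros y Uy A0y. exfalso. apply UA0empty. exists y; auto. }
  destruct (Hb G HG A0 HA0 (ex_intro _ a Ha)) as [x [A0x Gx]].
  destruct (Hcov x A0x I) as [n Enx].
  destruct (Gx n) as [O [[_ OE] Ox]]. exact (OE x Ox A0x Enx).
Qed.

(* The pseudobase of the subspace N, intersected with an open W inside N, is a family of
   open sets of the whole space. *)
Lemma countable_pseudobase_nbhd (y0 : S) (N : S -> Prop) :
  nbhd T N y0 -> has_countable_pseudobase (subspace T N) ->
  exists W C, T W /\ W y0 /\ pseudobase_within T W C.
Proof.
  intros [W [HW [Wy0 WN]]] [B [HB HBV]].
  exists W, (fun n y => W y /\ exists h : N y, B n (exist _ y h)).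
  split; [exact HW|]. split; [exact Wy0|]. split.
  - intro n. destruct (HB n) as [[U [HU EU]] _].
    apply (open_ext (fun y => U y /\ W y)); [apply open_inter; assumption|].
    intro y. split.
    + intros [Uy Wy]. split; [exact Wy|]. exists (WN y Wy). apply EU, Uy.
    + intros [Wy [h Bh]]. split; [apply EU in Bh; exact Bh | exact Wy].
  - intros V HV [v Vv] VW.
    destruct (HBV (fun s => V (proj1_sig s))) as [n Hn].
    + exists V. split; [exact HV | tauto].
    + exists (exist _ v (WN v (VW v Vv))). exact Vv.
    + exists n. split.
      * destruct (HB n) as [_ [[y h] By]]. exists y.
        split; [apply VW, (Hn _ By) | exists h; exact By].
      * intros y [_ [h Bh]]. exact (Hn _ Bh).
Qed.

End Topology.

Lemma dense_baire_subspace_everywhere_second_category {S : Type} (T : topology S)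
    (Q : S -> Prop) :
  is_topology T ->
  dense T Q -> baire (subspace T Q) -> everywhere_second_category T Q.
Proof.
  intros Htop HQ Hb A0 E HA0 A0ne Hcov.
  destruct (baire_everywhere_second_category (subspace T Q) (subspace_is_topology T Htop Q) Hb
              (fun s => A0 (proj1_sig s)) (fun n s => E n (proj1_sig s)))
    as [n [A1 [[U1 [HU1 EU1]] [[s A1s] [A1A0 Hdense]]]]].
  - exists A0. split; [exact HA0 | tauto].
  - destruct (HQ A0 HA0 A0ne) as [x [A0x Qx]]. exists (exist _ x Qx). exact A0x.
  - intros [x Qx] A0x _. exact (Hcov x A0x Qx).
  - exists n, (fun x => U1 x /\ A0 x). split; [apply (open_inter T Htop); assumption|].
    split; [exists (proj1_sig s); split; [apply EU1 | apply A1A0]; exact A1s|].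
    split; [intros x [_ A0x]; exact A0x|].
    intros O HO One OU1A0.
    destruct (HQ O HO One) as [x [Ox Qx]].
    destruct (Hdense (fun s => O (proj1_sig s))) as [[y Qy] [Oy Ey]].
    + exists O. split; [exact HO | tauto].
    + exists (exist _ x Qx). exact Ox.
    + intros [y Qy] Oy. apply EU1, (OU1A0 y Oy).
    + exists y. split; assumption.
Qed.

Section Metric.

Context {Z : Type} {d : Z -> Z -> R} (Hm : is_metric d).

Lemma dist_lt_sym {a b : Z} {r : R} : d a b < r -> d b a < r.
Proof. destruct Hm as [_ [_ [Hsym _]]]. rewrite Hsym. trivial. Qed.

Lemma dist_lt_triangle {a b c : Z} {r s : R} : d a b < r -> d b c < s -> d a c < r + s.
Proof. destruct Hm as [_ [_ [_ Htri]]]. pose proof (Htri a b c). lra. Qed.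

Lemma metric_ball_nbhd (z : Z) (r : R) : 0 < r -> nbhd (metric_topology d) (fun w => d z w < r) z.
Proof.
  destruct Hm as [_ [Hzero [_ Htri]]]. intro Hr.
  exists (fun w => d z w < r). split; [|split].
  - intros w Hw. exists (r - d z w). split; [lra|].
    intros v Hv. pose proof (Htri z w v). lra.
  - assert (d z z = 0) by (apply Hzero; reflexivity). lra.
  - auto.
Qed.

Lemma quasicontinuous_at_ball {S : Type} {T : topology S} {g : S -> Z} {t : S}
    {U : S -> Prop} {r : R} :
  quasicontinuous_at T (metric_topology d) g t -> T U -> U t -> 0 < r ->
  exists O, T O /\ (exists s, O s) /\ (forall s, O s -> U s) /\
            (forall s, O s -> d (g t) (g s) < r).
Proof.
  intros Hq HU Ut Hr.
  apply (Hq U (fun w => d (g t) w < r)); [exists U; auto | apply metric_ball_nbhd, Hr].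
Qed.

End Metric.

Lemma quasicontinuous_at_prod_of_rectangles {X Y Z : Type} (TX : topology X)
    (TY : topology Y) (d : Z -> Z -> R) (g : X * Y -> Z) (p : X * Y) :
  (forall A B e, TX A -> TY B -> A (fst p) -> B (snd p) -> 0 < e ->
     exists A1 B1, TX A1 /\ TY B1 /\ (exists x, A1 x) /\ (exists y, B1 y) /\
       (forall x, A1 x -> A x) /\ (forall y, B1 y -> B y) /\
       (forall x y, A1 x -> B1 y -> d (g p) (g (x, y)) < e)) ->
  quasicontinuous_at (prod_topology TX TY) (metric_topology d) g p.
Proof.
  intros Hrect U W [U0 [HU0 [U0p U0U]]] [W0 [HW0 [W0p W0W]]].
  destruct (HU0 p U0p) as [A [B [HA [HB [Ap [Bp HAB]]]]]].
  destruct (HW0 (g p) W0p) as [e [He Hball]].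
  destruct (Hrect A B e HA HB Ap Bp He)
    as [A1 [B1 [HA1 [HB1 [[x A1x] [[y B1y] [A1A [B1B Hclose]]]]]]]].
  exists (fun q => A1 (fst q) /\ B1 (snd q)). split; [|split; [|split]].
  - intros q [A1q B1q]. exists A1, B1. repeat split; auto.
  - exists (x, y). split; assumption.
  - intros [a b] [A1a B1b]. apply U0U, HAB; auto.
  - intros [a b] [A1a B1b]. apply W0W, Hball, Hclose; assumption.
Qed.

Section JointQuasicontinuity.

Context {X Y Z : Type} {TX : topology X} {TY : topology Y} {d : Z -> Z -> R} (f : X -> Y -> Z).
Hypotheses (HX : is_topology TX) (HY : is_topology TY) (Hm : is_metric d).
Hypothesis Hpseudobase : forall y : Y, exists N : Y -> Prop,
  nbhd TY N y /\ has_countable_pseudobase (subspace TY N).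

Lemma dense_in_uniform_rectangle (Q : X -> Prop) (W : Y -> Prop) (C : nat -> Y -> Prop)
    (y1 : Y) (V : Y -> Prop) (A0 : X -> Prop) (e : R) :
  everywhere_second_category TX Q -> pseudobase_within TY W C ->
  TY V -> V y1 -> (forall y, V y -> W y) -> TX A0 -> (exists x, A0 x) -> 0 < e ->
  (forall x, A0 x -> Q x -> quasicontinuous_at TY (metric_topology d) (f x) y1) ->
  exists A1 n, TX A1 /\ (exists x, A1 x) /\ (forall x, A1 x -> A0 x) /\
    (exists y, C n y) /\ (forall y, C n y -> V y) /\
    dense_in TX A1 (fun x => forall y, C n y -> d (f x y1) (f x y) < e).
Proof.
  intros HQ [HC HCV] HV Vy1 VW HA0 A0ne He Hqc.
  destruct (HQ A0 (fun n x => (exists y, C n y) /\ (forall y, C n y -> V y) /\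
                              forall y, C n y -> d (f x y1) (f x y) < e) HA0 A0ne)
    as [n [A1 [HA1 [[a A1a] [A1A0 Hdense]]]]].
  { intros x A0x Qx.
    destruct (quasicontinuous_at_ball Hm (Hqc x A0x Qx) HV Vy1 He)
      as [V' [HV' [V'ne [V'V Hclose]]]].
    destruct (HCV V' HV' V'ne (fun y V'y => VW y (V'V y V'y))) as [n [Cne CV']].
    exists n. split; [exact Cne|]. split; auto. }
  destruct (Hdense A1 HA1 (ex_intro _ a A1a) (fun x h => h)) as [_ [_ [Cne [CV _]]]].
  exists A1, n. repeat split; auto; [exists a; exact A1a|].
  intros O HO One OA1. destruct (Hdense O HO One OA1) as [x [Ox [_ [_ Hclose]]]].
  exists x. split; assumption.
Qed.

Lemma quasicontinuous_at_of_qc_x_sections :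
  baire TX ->
  (forall x : X,
      quasicontinuous TY (metric_topology d) (fun y => f x y) /\
      exists Dx : Y -> Prop, dense TY Dx /\
        forall y, Dx y -> quasicontinuous_at TX (metric_topology d) (fun x' => f x' y) x) ->
  forall p, quasicontinuous_at (prod_topology TX TY) (metric_topology d)
              (fun p : X * Y => f (fst p) (snd p)) p.
Proof.
  intros Hb Hsec [x0 y0]. apply quasicontinuous_at_prod_of_rectangles; simpl.
  intros A B e HA HB Ax0 By0 He.
  assert (He5 : 0 < e / 5) by lra.
  destruct (Hpseudobase y0) as [N [HN HNpb]].
  destruct (countable_pseudobase_nbhd TY HY y0 N HN HNpb) as [W [C [HW [Wy0 HC]]]].
  destruct (Hsec x0) as [Hqx0 [D0 [HD0 HD0q]]].
  destruct (quasicontinuous_at_ball Hm (Hqx0 y0) (open_inter TY HY B W HB HW) (conj By0 Wy0) He5)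
    as [V1 [HV1 [[v V1v] [V1BW Hd1]]]].
  destruct (HD0 V1 HV1 (ex_intro _ v V1v)) as [y1 [V1y1 D0y1]].
  destruct (quasicontinuous_at_ball Hm (HD0q y1 D0y1) HA Ax0 He5) as [A0 [HA0 [A0ne [A0A Hd2]]]].
  destruct (dense_in_uniform_rectangle (fun _ => True) W C y1 V1 A0 (e / 5)
              (baire_everywhere_second_category TX HX Hb) HC HV1 V1y1
              (fun y V1y => proj2 (V1BW y V1y)) HA0 A0ne He5 (fun x _ _ => proj1 (Hsec x) y1))
    as [A1 [n [HA1 [A1ne [A1A0 [Cne [CV1 Hdense]]]]]]].
  exists A1, (C n). split; [exact HA1|]. split; [apply HC|]. repeat split; auto.
  { intros y Cy. exact (proj1 (V1BW y (CV1 y Cy))). }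
  intros x y A1x Cy.
  destruct (Hsec x) as [Hqx [Dx [HDx HDxq]]].
  destruct (quasicontinuous_at_ball Hm (Hqx y) (proj1 HC n) Cy He5) as [B' [HB' [B'ne [B'C Hd3]]]].
  destruct (HDx B' HB' B'ne) as [y' [B'y' Dxy']].
  destruct (quasicontinuous_at_ball Hm (HDxq y' Dxy') HA1 A1x He5) as [A' [HA' [A'ne [A'A1 Hd4]]]].
  destruct (Hdense A' HA' A'ne A'A1) as [x' [A'x' Hd5]].
  replace e with (e / 5 + e / 5 + e / 5 + e / 5 + e / 5) by field.
  exact (dist_lt_triangle Hm (dist_lt_triangle Hm (dist_lt_triangle Hm
           (dist_lt_triangle Hm (Hd1 y1 V1y1) (Hd2 x' (A1A0 x' (A'A1 x' A'x'))))
           (Hd5 y' (B'C y' B'y'))) (dist_lt_sym Hm (Hd4 x' A'x'))) (dist_lt_sym Hm (Hd3 y' B'y'))).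
Qed.

Lemma quasicontinuous_at_of_qc_y_sections :
  (forall y : Y,
      quasicontinuous TX (metric_topology d) (fun x => f x y) /\
      exists Qy : X -> Prop, dense TX Qy /\ baire (subspace TX Qy) /\
        forall x, Qy x -> quasicontinuous_at TY (metric_topology d) (fun y' => f x y') y) ->
  forall p, quasicontinuous_at (prod_topology TX TY) (metric_topology d)
              (fun p : X * Y => f (fst p) (snd p)) p.
Proof.
  intros Hsec [x0 y0]. apply quasicontinuous_at_prod_of_rectangles; simpl.
  intros A B e HA HB Ax0 By0 He.
  assert (He3 : 0 < e / 3) by lra.
  destruct (Hpseudobase y0) as [N [HN HNpb]].
  destruct (countable_pseudobase_nbhd TY HY y0 N HN HNpb) as [W [C [HW [Wy0 HC]]]].
  destruct (Hsec y0) as [Hqy0 [Q [HQ [HQb HQq]]]].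
  destruct (quasicontinuous_at_ball Hm (Hqy0 x0) HA Ax0 He3) as [A0 [HA0 [A0ne [A0A Hd1]]]].
  destruct (dense_in_uniform_rectangle Q W C y0 (fun y => B y /\ W y) A0 (e / 3)
              (dense_baire_subspace_everywhere_second_category TX Q HX HQ HQb) HC
              (open_inter TY HY B W HB HW) (conj By0 Wy0) (fun y BWy => proj2 BWy)
              HA0 A0ne He3 (fun x _ Qx => HQq x Qx))
    as [A1 [n [HA1 [A1ne [A1A0 [Cne [CBW Hdense]]]]]]].
  exists A1, (C n). split; [exact HA1|]. split; [apply HC|]. repeat split; auto.
  { intros y Cy. exact (proj1 (CBW y Cy)). }
  intros x y A1x Cy.
  destruct (quasicontinuous_at_ball Hm (proj1 (Hsec y) x) HA1 A1x He3)
    as [A' [HA' [A'ne [A'A1 Hd2]]]].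
  destruct (Hdense A' HA' A'ne A'A1) as [x' [A'x' Hd3]].
  replace e with (e / 3 + e / 3 + e / 3) by field.
  exact (dist_lt_triangle Hm (dist_lt_triangle Hm (Hd1 x' (A1A0 x' (A'A1 x' A'x'))) (Hd3 y Cy))
           (dist_lt_sym Hm (Hd2 x' A'x'))).
Qed.

End JointQuasicontinuity.

Theorem theorem4p3 (X Y Z : Type) (TX : topology X) (TY : topology Y)
  (d : Z -> Z -> R) (f : X -> Y -> Z) :
  is_topology TX -> is_topology TY -> is_metric d ->
  baire TX ->
  (forall y : Y, exists N : Y -> Prop, nbhd TY N y /\
      has_countable_pseudobase (subspace TY N)) ->
  ((forall x : X,
      quasicontinuous TY (metric_topology d) (fun y => f x y) /\
      exists Dx : Y -> Prop, dense TY Dx /\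
        forall y, Dx y -> quasicontinuous_at TX (metric_topology d) (fun x' => f x' y) x)
   \/
   (forall y : Y,
      quasicontinuous TX (metric_topology d) (fun x => f x y) /\
      exists Qy : X -> Prop, dense TX Qy /\ baire (subspace TX Qy) /\
        forall x, Qy x -> quasicontinuous_at TY (metric_topology d) (fun y' => f x y') y)) ->
  quasicontinuous (prod_topology TX TY) (metric_topology d)
    (fun p : X * Y => f (fst p) (snd p)).
Proof.
  intros HX HY Hm Hb Hpseudobase [Hx_sections | Hy_sections].
  - exact (quasicontinuous_at_of_qc_x_sections f HX HY Hm Hpseudobase Hb Hx_sections).
  - exact (quasicontinuous_at_of_qc_y_sections f HX HY Hm Hpseudobase Hy_sections).
Qed.
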